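(* Up to isometries and dilations of $\mathbf R^{1,1}$, the only space-like curves in $\mathbf R^{1,1}$ that are invariant under a (nontrivial) self-similar motion are: \begin{itemize} \item lines, invariant under translations along their direction vector and dilations about a point on the line; \item hyperbolas with light-like asymptotes, invariant under hyperbolic rotations around their midpoint; \item the Minkowski analogues of logarithmic spirals $X = \frac{1}{1+h\alpha}s^{1+h\alpha}$, i.e. in $(\xi,\eta)$-coordinates $X(s)=\left(\frac{s^{1+\alpha}}{1+\alpha},\frac{s^{1-\alpha}}{1-\alpha}\right)$, $s>0$, invariant under any combination of hyperbolic rotation and dilation $g(t)e^{hf(t)}$ with $e^{f(t)} = g(t)^{\alpha}$; \item the curve $\xi = e^{2\eta}$, invariant under any combination of hyperbolic rotation, dilation and translation with $g(t)=e^{f(t)}$ and $H(t) = (0,f(t))$ (in $(\xi,\eta)$-coordinates). \end{itemize}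
   Context: $\mathbf R^{1,1}$ is $\mathbf R^2$ with $\langle (x_1,y_1),(x_2,y_2)\rangle = x_1x_2-y_1y_2$; points $x+hy$ with $h^2=1$, $e^{hf}=\cosh f+h\sinh f$, $s^{1+h\alpha}=s\,e^{h\alpha\log s}$. Light-like coordinates $\xi=x+y$, $\eta=x-y$, writing a point as $(\xi,\eta)$; in these coordinates multiplication is componentwise and $e^{hf}=(e^f,e^{-f})$. A self-similar motion of a curve $X$ is $\hat X(u,t)=g(t)e^{hf(t)}X(u)+H(t)$ with differentiable $f,g:J\to\mathbf R$, $H:J\to\mathbf R^{1,1}$, $f(0)=0$, $g(0)=1$, $H(0)=0$. The curve is invariant under the motion if $\langle\partial_t\hat X, N\rangle=0$, where $N$ is the unit normal (reflection of the unit tangent across $y=x$), i.e. the motion maps the curve into itself up to reparametrization. *)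

From Stdlib Require Import Reals.
From Coquelicot Require Import Coquelicot.
Open Scope R_scope.

(** Points of R^{1,1} in (x,y)-coordinates: p = x + h y. *)
Definition mink (p q : R * R) : R := fst p * fst q - snd p * snd q.

Definition xi (p : R * R) : R := fst p + snd p.
Definition eta (p : R * R) : R := fst p - snd p.

(** Multiplication in the hyperbolic numbers (h^2 = 1). *)
Definition hmul (p q : R * R) : R * R :=
  (fst p * fst q + snd p * snd q, fst p * snd q + snd p * fst q).

(** e^{h f} = cosh f + h sinh f. *)
Definition ehf (f : R) : R * R := (cosh f, sinh f).

Definition in_open (a b : Rbar) (u : R) : Prop :=
  Rbar_lt a (Finite u) /\ Rbar_lt (Finite u) b.

Definition dcurve (X : R -> R * R) (u : R) : R * R :=
  (Derive (fun s => fst (X s)) u, Derive (fun s => snd (X s)) u).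

Definition space_like_curve (a b : Rbar) (X : R -> R * R) : Prop :=
  Rbar_lt a b /\
  (forall (n : nat) (u : R), in_open a b u ->
     ex_derive_n (fun s => fst (X s)) n u /\ ex_derive_n (fun s => snd (X s)) n u) /\
  (forall u : R, in_open a b u -> mink (dcurve X u) (dcurve X u) > 0).

(** Unit normal: reflection of the unit tangent across y = x. *)
Definition unit_normal (v : R * R) : R * R :=
  let n := sqrt (mink v v) in (snd v / n, fst v / n).

(** The motion  X^(u,t) = g(t) e^{h f(t)} X(u) + H(t). *)
Definition motion (f g : R -> R) (H : R -> R * R) (P : R * R) (t : R) : R * R :=
  (g t * fst (hmul (ehf (f t)) P) + fst (H t),
   g t * snd (hmul (ehf (f t)) P) + snd (H t)).

Definition self_similar_motion (c d : Rbar) (f g : R -> R) (H : R -> R * R) : Prop :=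
  in_open c d 0 /\
  (forall t, in_open c d t ->
     ex_derive f t /\ ex_derive g t /\
     ex_derive (fun s => fst (H s)) t /\ ex_derive (fun s => snd (H s)) t) /\
  f 0 = 0 /\ g 0 = 1 /\ H 0 = (0, 0).

Definition nontrivial_motion (c d : Rbar) (f g : R -> R) (H : R -> R * R) : Prop :=
  exists t, in_open c d t /\ (f t <> 0 \/ g t <> 1 \/ H t <> (0, 0)).

Definition invariant_under (a b : Rbar) (X : R -> R * R)
    (c d : Rbar) (f g : R -> R) (H : R -> R * R) : Prop :=
  forall u t, in_open a b u -> in_open c d t ->
    mink (Derive (fun s => fst (motion f g H (X u) s)) t,
          Derive (fun s => snd (motion f g H (X u) s)) t)
         (unit_normal (dcurve (fun s => motion f g H (X s) t) u)) = 0.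

Definition invariant_nontrivial (a b : Rbar) (X : R -> R * R) : Prop :=
  exists (c d : Rbar) (f g : R -> R) (H : R -> R * R),
    self_similar_motion c d f g H /\ nontrivial_motion c d f g H /\
    invariant_under a b X c d f g H.

(** Similarities of R^{1,1}: an isometry (Lorentz transformation, possibly
    orientation/time reversing, plus translation) followed by a dilation. *)
Definition similarity (S : R * R -> R * R) : Prop :=
  exists (lam p q r s b1 b2 : R),
    lam > 0 /\
    (forall v w : R * R,
       mink (p * fst v + q * snd v, r * fst v + s * snd v)
            (p * fst w + q * snd w, r * fst w + s * snd w) = mink v w) /\
    (forall v : R * R,
       S v = (lam * (p * fst v + q * snd v) + b1, lam * (r * fst v + s * snd v) + b2)).

Definition on_line (P : R * R) : Prop := snd P = 0.
Definition on_hyperbola (P : R * R) : Prop := xi P * eta P = -1.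
Definition on_spiral (alpha : R) (P : R * R) : Prop :=
  exists s : R, s > 0 /\
    xi P = Rpower s (1 + alpha) / (1 + alpha) /\
    eta P = Rpower s (1 - alpha) / (1 - alpha).
Definition on_exp_curve (P : R * R) : Prop := xi P = exp (2 * eta P).

(* In light-like coordinates (xi, eta) a self-similar motion acts diagonally,
   xi |-> g e^f xi + xi(H) and eta |-> g e^-f eta + eta(H).  So a curve is invariant
   exactly when, at each time, it is tangent to the affine field
   (k1 xi + c1, k2 eta + c2) generating the motion, and conversely the flow of any
   nonzero such field is a self-similar motion.  Integrating the tangency relation
   (k1 xi + c1) eta' = (k2 eta + c2) xi' along a space-like curve (xi' eta' > 0)
   gives a line when k1 = k2 or k1 = k2 = 0, the hyperbola xi eta = const when
   k2 = -k1, an exponential curve when one rate vanishes, and otherwise the spiral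
   k2 ln |xi| = k1 ln |eta| + const.  Space-likeness also makes the normalising
   affine maps, diagonal in light-like coordinates, similarities. *)

From Stdlib Require Import Reals Lra Classical.
From Coquelicot Require Import Coquelicot.
Open Scope R_scope.

(* Folds the eta-expanded [fun x => F x] left by [auto_derive] back into [F]. *)
Ltac simpl_fun :=
  repeat match goal with |- context [fun x : R => ?F x] => change (fun x : R => F x) with F end.

(** * Calculus on an open interval *)

Lemma in_open_locally a b u : in_open a b u -> locally u (in_open a b).
Proof.
  intros [Hau Hub]. apply (locally_interval _ u a b Hau Hub).
  intros y Hay Hyb. split; assumption.
Qed.

Lemma in_open_between a b u v w :
  in_open a b u -> in_open a b v -> u <= w <= v -> in_open a b w.
Proof.
  intros [Hau _] [_ Hvb] [Huw Hwv]. split.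
  - destruct a; simpl in *; auto; lra.
  - destruct b; simpl in *; auto; lra.
Qed.

Lemma in_open_inhabited a b : Rbar_lt a b -> exists u, in_open a b u.
Proof.
  intros Hab. destruct a as [a| |], b as [b| |]; simpl in Hab; try contradiction.
  - exists ((a + b) / 2); split; simpl; lra.
  - exists (a + 1); split; simpl; auto; lra.
  - exists (b - 1); split; simpl; auto; lra.
  - exists 0; split; simpl; auto.
Qed.

Lemma is_derive_vanishing_on a b F u l :
  (forall w, in_open a b w -> F w = 0) -> in_open a b u -> is_derive F u l -> l = 0.
Proof.
  intros HF Hu Hd.
  assert (H0 : is_derive F u 0).
  { apply (is_derive_ext_loc (fun _ => 0)).
    - apply (filter_imp (in_open a b)); [intros w Hw; rewrite HF; auto | apply in_open_locally; auto].
    - auto_derive; reflexivity. }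
  rewrite <- (is_derive_unique _ _ _ Hd). apply is_derive_unique; assumption.
Qed.

Lemma MVT_in_open a b F dF u v :
  in_open a b u -> in_open a b v -> u < v ->
  (forall w, in_open a b w -> is_derive F w (dF w)) ->
  exists w, u < w < v /\ F v - F u = dF w * (v - u).
Proof.
  intros Hu Hv Huv Hd.
  destruct (MVT_cor2 F dF u v Huv) as [w [Hw1 Hw2]].
  - intros w Hw. apply is_derive_Reals, Hd, (in_open_between a b u v); auto.
  - exists w; split; assumption.
Qed.

Lemma injective_on_of_derive_nonzero a b F dF :
  (forall w, in_open a b w -> is_derive F w (dF w) /\ dF w <> 0) ->
  forall u v, in_open a b u -> in_open a b v -> F u = F v -> u = v.
Proof.
  assert (Hlt : forall u v, in_open a b u -> in_open a b v -> u < v ->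
            (forall w, in_open a b w -> is_derive F w (dF w) /\ dF w <> 0) -> F u <> F v).
  { intros u v Hu Hv Huv Hd Heq.
    destruct (MVT_in_open a b F dF u v) as [w [Hw HMVT]]; auto.
    - intros w Hw; apply Hd; auto.
    - assert (Hwi : in_open a b w) by (apply (in_open_between a b u v); auto; lra).
      apply (proj2 (Hd w Hwi)).
      apply (Rmult_eq_reg_r (v - u)); lra. }
  intros Hd u v Hu Hv Heq.
  destruct (Rtotal_order u v) as [H|[H|H]]; auto; exfalso.
  - exact (Hlt u v Hu Hv H Hd Heq).
  - exact (Hlt v u Hv Hu H Hd (eq_sym Heq)).
Qed.

Lemma derive_zero_const_on a b F u v :
  (forall w, in_open a b w -> is_derive F w 0) ->
  in_open a b u -> in_open a b v -> F u = F v.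
Proof.
  intros Hd Hu Hv. destruct (Rtotal_order u v) as [H|[H|H]].
  - destruct (MVT_in_open a b F (fun _ => 0) u v) as [w [_ Hw]]; auto. lra.
  - subst; reflexivity.
  - destruct (MVT_in_open a b F (fun _ => 0) v u) as [w [_ Hw]]; auto. lra.
Qed.

(* The exceptional point [w0] is handled by applying the mean value theorem on
   both sides of it. *)
Lemma derive_zero_except_const_on a b F dF w0 u v :
  (forall w, in_open a b w -> is_derive F w (dF w)) ->
  (forall w, in_open a b w -> w <> w0 -> dF w = 0) ->
  in_open a b u -> in_open a b v -> F u = F v.
Proof.
  intros Hd Hz.
  assert (Hseg : forall u v, in_open a b u -> in_open a b v -> u < v ->
            ~ (u < w0 < v) -> F u = F v).
  { intros x y Hx Hy Hxy Hw0.
    destruct (MVT_in_open a b F dF x y) as [w [Hw HMVT]]; auto.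
    assert (Hwi : in_open a b w) by (apply (in_open_between a b x y); auto; lra).
    rewrite Hz in HMVT; auto; [lra | intros ->; tauto]. }
  assert (Hlt : forall u v, in_open a b u -> in_open a b v -> u < v -> F u = F v).
  { intros x y Hx Hy Hxy.
    destruct (classic (x < w0 < y)) as [Hw0 | Hw0]; [ | apply Hseg; auto].
    assert (Hw0i : in_open a b w0) by (apply (in_open_between a b x y); auto; lra).
    transitivity (F w0); apply Hseg; auto; lra. }
  intros Hu Hv. destruct (Rtotal_order u v) as [H|[H|H]].
  - apply Hlt; auto.
  - subst; reflexivity.
  - symmetry; apply Hlt; auto.
Qed.

Lemma nonvanishing_same_sign a b F u v :
  (forall w, in_open a b w -> ex_derive F w) ->
  (forall w, in_open a b w -> F w <> 0) ->
  in_open a b u -> in_open a b v -> F u * F v > 0.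
Proof.
  intros Hd Hnz.
  assert (Hcont : forall w, in_open a b w -> continuity_pt F w).
  { intros w Hw. destruct (Hd w Hw) as [l Hl].
    exact (derivable_continuous_pt F w (exist _ l (proj1 (is_derive_Reals F w l) Hl))). }
  assert (Hlt : forall x y, in_open a b x -> in_open a b y -> x < y -> F x * F y > 0).
  { intros x y Hx Hy Hxy.
    assert (Hseg : forall z, x <= z <= y -> in_open a b z)
      by (intros z Hz; apply (in_open_between a b x y); auto).
    assert (Fx := Hnz x Hx). assert (Fy := Hnz y Hy).
    destruct (Rlt_or_le 0 (F x * F y)) as [Hpos | Hneg]; [exact Hpos | exfalso].
    destruct (Rlt_or_le (F x) 0) as [Hx0 | Hx0].
    - assert (Hy0 : 0 < F y) by (destruct (Rlt_or_le 0 (F y)); [assumption | nra]).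
      destruct (Ranalysis5.IVT_interv F x y) as [z [Hz Fz]]; try assumption.
      + intros z Hz; apply Hcont, Hseg, Hz.
      + exact (Hnz z (Hseg z Hz) Fz).
    - assert (Hy0 : F y < 0) by (destruct (Rlt_or_le (F y) 0); [assumption | nra]).
      destruct (Ranalysis5.IVT_interv (fun w => - F w) x y) as [z [Hz Fz]];
        try assumption; try lra.
      + intros z Hz; apply continuity_pt_opp, Hcont, Hseg, Hz.
      + apply (Hnz z (Hseg z Hz)); lra. }
  intros Hu Hv. destruct (Rtotal_order u v) as [H|[H|H]].
  - apply Hlt; auto.
  - subst. assert (Fv := Hnz v Hv). nra.
  - rewrite Rmult_comm; apply Hlt; auto.
Qed.

Lemma ln_ratio_invariant a b (U V : R -> R) k1 k2 m n u0 :
  (forall w, in_open a b w -> ex_derive U w /\ ex_derive V w) ->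
  (forall w, in_open a b w -> U w + m <> 0 /\ V w + n <> 0) ->
  (forall w, in_open a b w -> k1 * (U w + m) * Derive V w = k2 * (V w + n) * Derive U w) ->
  in_open a b u0 -> forall u, in_open a b u ->
  (U u + m) / (U u0 + m) > 0 /\ (V u + n) / (V u0 + n) > 0 /\
  k2 * ln ((U u + m) / (U u0 + m)) = k1 * ln ((V u + n) / (V u0 + n)).
Proof.
  intros HD Hnz Hrel Hu0.
  assert (Hratio : forall (F : R -> R), (forall w, in_open a b w -> ex_derive F w) ->
            (forall w, in_open a b w -> F w <> 0) ->
            forall u, in_open a b u -> F u / F u0 > 0).
  { intros F HF HF0 u Hu. replace (F u / F u0) with (F u0 * F u / (F u0 * F u0))
      by (field; apply HF0; auto).
    apply Rdiv_lt_0_compat; [apply (nonvanishing_same_sign a b F); auto | ].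
    apply Rsqr_pos_lt, HF0, Hu0. }
  assert (HP : forall u, in_open a b u -> (U u + m) / (U u0 + m) > 0).
  { apply (Hratio (fun w => U w + m)); [ | apply Hnz].
    intros w Hw. destruct (HD w Hw). auto_derive; auto. }
  assert (HQ : forall u, in_open a b u -> (V u + n) / (V u0 + n) > 0).
  { apply (Hratio (fun w => V w + n)); [ | apply Hnz].
    intros w Hw. destruct (HD w Hw). auto_derive; auto. }
  intros u Hu. split; [auto | split; [auto | ]].
  apply Rminus_diag_uniq.
  transitivity (k2 * ln ((U u0 + m) / (U u0 + m)) - k1 * ln ((V u0 + n) / (V u0 + n)));
    [ | destruct (Hnz u0 Hu0); unfold Rdiv; rewrite !Rinv_r, ln_1 by auto; ring].
  apply (derive_zero_const_on a b
           (fun w => k2 * ln ((U w + m) / (U u0 + m)) - k1 * ln ((V w + n) / (V u0 + n)))); auto.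
  intros w Hw. destruct (HD w Hw). destruct (Hnz w Hw). destruct (Hnz u0 Hu0).
  assert (HPw := HP w Hw). assert (HQw := HQ w Hw).
  auto_derive; [repeat split; auto | simpl_fun].
  transitivity ((k2 * (V w + n) * Derive U w - k1 * (U w + m) * Derive V w)
                / ((U w + m) * (V w + n))); [field; repeat split; auto | ].
  rewrite Hrel by auto. field. split; auto.
Qed.

(* The spiral is [(x, e) = (s^(1 + alpha) / (1 + alpha), s^(1 - alpha) / (1 - alpha))]
   with [alpha = (k1 - k2) / (k1 + k2)], i.e. [s = p^(1 / (1 + alpha))]. *)
Lemma spiral_parameter k1 k2 p q : k1 <> 0 -> k1 + k2 <> 0 -> p > 0 -> q > 0 ->
  k2 * ln p = k1 * ln q ->
  exists s, s > 0 /\ Rpower s (1 + (k1 - k2) / (k1 + k2)) = p /\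
                     Rpower s (1 - (k1 - k2) / (k1 + k2)) = q.
Proof.
  intros Hk1 Hsum Hp Hq Hlog. exists (Rpower p ((k1 + k2) / (2 * k1))).
  split; [apply exp_pos | split]; rewrite (Rpower_mult p).
  - replace ((k1 + k2) / (2 * k1) * (1 + (k1 - k2) / (k1 + k2))) with 1 by (field; auto).
    apply Rpower_1, Hp.
  - unfold Rpower.
    replace ((k1 + k2) / (2 * k1) * (1 - (k1 - k2) / (k1 + k2)) * ln p) with (k2 * ln p / k1)
      by (field; auto).
    rewrite Hlog. replace (k1 * ln q / k1) with (ln q) by (field; auto). apply exp_ln, Hq.
Qed.

(** * Curves tangent to an affine field *)

Definition twice_derivable_on a b (U : R -> R) :=
  forall u, in_open a b u -> ex_derive U u /\ ex_derive (Derive U) u.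

(* In light-like coordinates the generator of a self-similar motion is an affine
   field [(x, y) |-> (k1 x + c1, k2 y + c2)]. *)
Definition tangent_to_affine_field a b (U V : R -> R) (k1 c1 k2 c2 : R) :=
  forall u, in_open a b u -> (k1 * U u + c1) * Derive V u = (k2 * V u + c2) * Derive U u.

Definition nonzero_field (k1 c1 k2 c2 : R) := ~ (k1 = 0 /\ c1 = 0 /\ k2 = 0 /\ c2 = 0).

Definition of_lightlike (x e : R) : R * R := ((x + e) / 2, (x - e) / 2).

Lemma xi_of_lightlike x e : xi (of_lightlike x e) = x.
Proof. unfold xi, of_lightlike; simpl; field. Qed.

Lemma eta_of_lightlike x e : eta (of_lightlike x e) = e.
Proof. unfold eta, of_lightlike; simpl; field. Qed.

Definition model_curve a b (Y : R -> R * R) : Prop :=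
  (forall u, in_open a b u -> on_line (Y u)) \/
  (forall u, in_open a b u -> on_hyperbola (Y u)) \/
  (exists alpha : R, alpha <> 1 /\ alpha <> -1 /\
     forall u, in_open a b u -> on_spiral alpha (Y u)) \/
  (forall u, in_open a b u -> on_exp_curve (Y u)).

(* A curve with light-like coordinates [(U, V)] is mapped onto a model curve by an
   affine map diagonal in light-like coordinates; [A * B > 0] makes it a similarity. *)
Definition lightlike_model a b (U V : R -> R) :=
  exists A B b1 b2, A * B > 0 /\
    model_curve a b (fun u => of_lightlike (A * U u + b1) (B * V u + b2)).

Lemma on_line_of_lightlike x e : x = e -> on_line (of_lightlike x e).
Proof. intros ->. unfold on_line, of_lightlike; simpl; field. Qed.

Lemma on_hyperbola_of_lightlike x e : x * e = -1 -> on_hyperbola (of_lightlike x e).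
Proof. unfold on_hyperbola. rewrite xi_of_lightlike, eta_of_lightlike. auto. Qed.

Lemma on_exp_curve_of_lightlike x e : x = exp (2 * e) -> on_exp_curve (of_lightlike x e).
Proof. unfold on_exp_curve. rewrite xi_of_lightlike, eta_of_lightlike. auto. Qed.

Lemma on_spiral_of_lightlike alpha x e s : s > 0 ->
  x = Rpower s (1 + alpha) / (1 + alpha) -> e = Rpower s (1 - alpha) / (1 - alpha) ->
  on_spiral alpha (of_lightlike x e).
Proof.
  intros Hs Hx He. exists s. rewrite xi_of_lightlike, eta_of_lightlike. auto.
Qed.

Section AffineFieldTangency.

Variables (a b : Rbar) (U V : R -> R).
Hypothesis Hab : Rbar_lt a b.
Hypothesis HU : twice_derivable_on a b U.
Hypothesis HV : twice_derivable_on a b V.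
Hypothesis Hsl : forall u, in_open a b u -> Derive U u * Derive V u > 0.

Lemma Derive_U_neq0 u : in_open a b u -> Derive U u <> 0.
Proof. intros Hu E. specialize (Hsl u Hu). rewrite E in Hsl. lra. Qed.

Lemma Derive_V_neq0 u : in_open a b u -> Derive V u <> 0.
Proof. intros Hu E. specialize (Hsl u Hu). rewrite E in Hsl. lra. Qed.

Lemma lightlike_model_const_slope mu :
  (forall u, in_open a b u -> Derive V u = mu * Derive U u) -> lightlike_model a b U V.
Proof.
  intros Hmu. destruct (in_open_inhabited a b Hab) as [u0 Hu0].
  assert (Hconst : forall u, in_open a b u -> V u - mu * U u = V u0 - mu * U u0).
  { intros u Hu.
    apply (derive_zero_const_on a b (fun w => V w - mu * U w)); auto.
    intros w Hw. destruct (HU w Hw) as [HU1 _]. destruct (HV w Hw) as [HV1 _].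
    auto_derive; auto. simpl_fun. rewrite Hmu; auto. ring. }
  assert (Hmu_pos : mu > 0).
  { specialize (Hsl u0 Hu0). rewrite Hmu in Hsl; auto.
    destruct (Rlt_or_le 0 mu); [assumption | nra]. }
  exists mu, 1, (V u0 - mu * U u0), 0. split; [lra | ].
  left. intros u Hu. apply on_line_of_lightlike. specialize (Hconst u Hu). lra.
Qed.

Variables (k1 c1 k2 c2 : R).
Hypothesis Htan : tangent_to_affine_field a b U V k1 c1 k2 c2.

Lemma tangent_to_affine_field_derive u : in_open a b u ->
  k1 * Derive U u * Derive V u + (k1 * U u + c1) * Derive (Derive V) u =
  k2 * Derive V u * Derive U u + (k2 * V u + c2) * Derive (Derive U) u.
Proof.
  intros Hu. destruct (HU u Hu) as [HU1 HU2]. destruct (HV u Hu) as [HV1 HV2].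
  apply Rminus_diag_uniq.
  apply (is_derive_vanishing_on a b
           (fun w => (k1 * U w + c1) * Derive V w - (k2 * V w + c2) * Derive U w) u).
  - intros w Hw. rewrite (Htan w Hw). ring.
  - exact Hu.
  - auto_derive; [repeat split; auto | simpl_fun; ring].
Qed.

Lemma field_components_same_sign u : in_open a b u -> k2 * V u + c2 <> 0 ->
  (k1 * U u + c1) * (k2 * V u + c2) > 0.
Proof.
  intros Hu Hq. assert (Hs := Hsl u Hu).
  assert (Hsq : 0 < ((k2 * V u + c2) * Derive U u) * ((k2 * V u + c2) * Derive U u)).
  { apply Rsqr_pos_lt, Rmult_integral_contrapositive_currified; auto.
    apply Derive_U_neq0; auto. }
  assert (E : (k1 * U u + c1) * (k2 * V u + c2) * (Derive U u * Derive V u) =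
              ((k2 * V u + c2) * Derive U u) * ((k2 * V u + c2) * Derive U u)).
  { transitivity (((k1 * U u + c1) * Derive V u) * ((k2 * V u + c2) * Derive U u));
      [ring | rewrite (Htan u Hu); ring]. }
  nra.
Qed.

(* When [k1 <> k2] the field has no zero on the curve: at such a point the
   derivative of the tangency relation would force [(k1 - k2) U' V' = 0]. *)
Lemma field_components_neq0 u : in_open a b u -> k1 <> k2 ->
  k1 * U u + c1 <> 0 /\ k2 * V u + c2 <> 0.
Proof.
  intros Hu Hk. assert (Ht := Htan u Hu).
  assert (HU1 := Derive_U_neq0 u Hu). assert (HV1 := Derive_V_neq0 u Hu).
  assert (Hboth : ~ (k1 * U u + c1 = 0 /\ k2 * V u + c2 = 0)).
  { intros [E1 E2]. assert (D := tangent_to_affine_field_derive u Hu).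
    rewrite E1, E2 in D. apply Hk.
    apply (Rmult_eq_reg_r (Derive U u * Derive V u)); [lra | apply Rgt_not_eq, Hsl, Hu]. }
  split; intros E; apply Hboth; split; auto; rewrite E, Rmult_0_l in Ht.
  - destruct (Rmult_integral _ _ (eq_sym Ht)); tauto.
  - destruct (Rmult_integral _ _ Ht); tauto.
Qed.

Lemma lightlike_model_const_field :
  k1 = 0 -> k2 = 0 -> nonzero_field k1 c1 k2 c2 -> lightlike_model a b U V.
Proof.
  intros -> -> Hnz. destruct (in_open_inhabited a b Hab) as [u0 Hu0].
  assert (Hc1 : c1 <> 0).
  { intros ->. apply Hnz. repeat split; auto.
    assert (E := Htan u0 Hu0).
    destruct (Rmult_integral c2 (Derive U u0)); [lra | auto | ].
    exfalso; apply (Derive_U_neq0 u0); auto. }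
  apply (lightlike_model_const_slope (c2 / c1)). intros u Hu.
  apply (Rmult_eq_reg_l c1); auto. assert (E := Htan u Hu). field_simplify; auto. lra.
Qed.

(* A radial field: the slope [V' / U'] is constant away from the centre, which
   the curve meets at most once since [U] is strictly monotone. *)
Lemma lightlike_model_radial : k1 = k2 -> k1 <> 0 -> lightlike_model a b U V.
Proof.
  intros Hk12 Hk. destruct (in_open_inhabited a b Hab) as [u0 Hu0].
  set (P := fun w => k1 * U w + c1).
  assert (Hcentre : exists w0, forall w, in_open a b w -> P w = 0 -> w = w0).
  { destruct (classic (exists w0, in_open a b w0 /\ P w0 = 0)) as [[w0 [Hw0 Pw0]] | Hnone].
    - exists w0. intros w Hw Pw.
      apply (injective_on_of_derive_nonzero a b P (fun w => k1 * Derive U w)); auto.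
      + intros z Hz. destruct (HU z Hz) as [HU1 _]. split.
        * unfold P. auto_derive; [auto | simpl_fun; ring].
        * apply Rmult_integral_contrapositive_currified; auto. apply Derive_U_neq0; auto.
      + congruence.
    - exists 0. intros w Hw Pw. exfalso. apply Hnone. exists w; auto. }
  destruct Hcentre as [w0 Hw0].
  set (slope := fun w => Derive V w / Derive U w).
  assert (Hslope : forall u, in_open a b u -> slope u = slope u0).
  { intros u Hu.
    apply (derive_zero_except_const_on a b slope
             (fun w => (Derive (Derive V) w * Derive U w - Derive V w * Derive (Derive U) w)
                       / (Derive U w * Derive U w)) w0); auto.
    - intros w Hw. destruct (HU w Hw) as [HU1 HU2]. destruct (HV w Hw) as [HV1 HV2].
      assert (HU0 := Derive_U_neq0 w Hw).
      unfold slope. auto_derive; [repeat split; auto | simpl_fun; field; auto].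
    - intros w Hw Hneq.
      assert (Pw : P w <> 0) by (intro Z; apply Hneq, Hw0; auto).
      assert (E1 := Htan w Hw). assert (E2 := tangent_to_affine_field_derive w Hw).
      rewrite <- Hk12 in E1, E2.
      assert (E3 : P w * (Derive (Derive V) w * Derive U w - Derive V w * Derive (Derive U) w) = 0).
      { unfold P in *.
        assert (E4 : (k1 * U w + c1) * Derive (Derive V) w = (k1 * V w + c2) * Derive (Derive U) w)
          by lra.
        transitivity (Derive U w * ((k1 * U w + c1) * Derive (Derive V) w)
                      - Derive (Derive U) w * ((k1 * U w + c1) * Derive V w)); [ring | ].
        rewrite E4, E1. ring. }
      destruct (Rmult_integral _ _ E3) as [Z | Z]; [contradiction | ].
      cbv beta. rewrite Z. apply Rmult_0_l. }
  apply (lightlike_model_const_slope (slope u0)). intros u Hu.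
  rewrite <- (Hslope u Hu). unfold slope. field. apply Derive_U_neq0; auto.
Qed.

Lemma lightlike_model_hyperbola : k2 = - k1 -> k1 <> 0 -> lightlike_model a b U V.
Proof.
  intros Hk12 Hk. destruct (in_open_inhabited a b Hab) as [u0 Hu0].
  assert (Hne : k1 <> k2) by (intros Z; apply Hk; lra).
  assert (Hk2 : k2 <> 0) by (intros Z; apply Hk; lra).
  set (Pr := fun w => (U w + c1 / k1) * (V w + c2 / k2)).
  assert (HPr : forall u, in_open a b u -> Pr u = Pr u0).
  { intros u Hu. apply (derive_zero_const_on a b Pr); auto. intros w Hw.
    destruct (HU w Hw) as [HU1 _]. destruct (HV w Hw) as [HV1 _].
    assert (E := Htan w Hw). rewrite Hk12 in E.
    unfold Pr. auto_derive; [auto | simpl_fun].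
    rewrite Hk12.
    transitivity (((k1 * U w + c1) * Derive V w - (- k1 * V w + c2) * Derive U w) / k1);
      [field; auto | rewrite E; field; auto]. }
  set (K := Pr u0).
  assert (HK : K < 0).
  { assert (Hsign := field_components_same_sign u0 Hu0
                       (proj2 (field_components_neq0 u0 Hu0 Hne))).
    assert (Hsq : 0 < k1 * k1) by (apply Rsqr_pos_lt; auto).
    replace K with ((k1 * U u0 + c1) * (k2 * V u0 + c2) / (k1 * k2)) by (unfold K, Pr; field; auto).
    replace (k1 * k2) with (- (k1 * k1)) by (rewrite Hk12; ring).
    apply Rdiv_pos_neg; lra. }
  exists 1, (-1 / K), (c1 / k1), (- c2 / (k2 * K)). split.
  - replace (1 * (-1 / K)) with (/ (- K)) by (field; lra). apply Rinv_0_lt_compat. lra.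
  - right; left. intros u Hu. apply on_hyperbola_of_lightlike.
    transitivity (- Pr u / K); [unfold Pr; field; split; auto; lra | ].
    rewrite (HPr u Hu). fold K. field. lra.
Qed.

Lemma lightlike_model_exp : k2 = 0 -> k1 <> 0 -> lightlike_model a b U V.
Proof.
  intros Hk2 Hk1. destruct (in_open_inhabited a b Hab) as [u0 Hu0].
  assert (Hne : k1 <> k2) by (intros Z; apply Hk1; lra).
  assert (Hc2 : c2 <> 0).
  { destruct (field_components_neq0 u0 Hu0 Hne) as [_ H]. rewrite Hk2 in H. lra. }
  set (F := fun w => (U w + c1 / k1) * exp (- (k1 / c2) * V w)).
  assert (HF : forall u, in_open a b u -> F u = F u0).
  { intros u Hu. apply (derive_zero_const_on a b F); auto. intros w Hw.
    destruct (HU w Hw) as [HU1 _]. destruct (HV w Hw) as [HV1 _].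
    assert (E := Htan w Hw). rewrite Hk2 in E.
    unfold F. auto_derive; [auto | simpl_fun].
    transitivity (exp (- (k1 / c2) * V w)
                  * ((0 * V w + c2) * Derive U w - (k1 * U w + c1) * Derive V w) / c2);
      [field; auto | rewrite E; field; auto]. }
  set (K := F u0).
  assert (HK : K * k1 * c2 > 0).
  { assert (Hsign := field_components_same_sign u0 Hu0
                       (proj2 (field_components_neq0 u0 Hu0 Hne))).
    rewrite Hk2, Rmult_0_l, Rplus_0_l in Hsign.
    replace (K * k1 * c2) with (exp (- (k1 / c2) * V u0) * ((k1 * U u0 + c1) * c2))
      by (unfold K, F; field; auto).
    apply Rmult_lt_0_compat; [apply exp_pos | exact Hsign]. }
  assert (HK0 : K <> 0) by (intro Z; rewrite Z in HK; lra).
  exists (/ K), (k1 / (2 * c2)), (c1 / (k1 * K)), 0. split.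
  - replace (/ K * (k1 / (2 * c2))) with (K * k1 * c2 / (2 * ((c2 * K) * (c2 * K))))
      by (field; auto).
    assert (0 < (c2 * K) * (c2 * K))
      by (apply Rsqr_pos_lt, Rmult_integral_contrapositive_currified; auto).
    apply Rdiv_lt_0_compat; lra.
  - right; right; right. intros u Hu. apply on_exp_curve_of_lightlike.
    assert (E : U u + c1 / k1 = K * exp (k1 / c2 * V u)).
    { unfold K. rewrite <- (HF u Hu). unfold F. rewrite Rmult_assoc, <- exp_plus.
      replace (- (k1 / c2) * V u + k1 / c2 * V u) with 0 by ring. rewrite exp_0. ring. }
    replace (/ K * U u + c1 / (k1 * K)) with ((U u + c1 / k1) / K) by (field; auto).
    rewrite E. replace (2 * (k1 / (2 * c2) * V u + 0)) with (k1 / c2 * V u) by (field; auto).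
    field; auto.
Qed.

(* With [P = U + c1/k1] and [Q = V + c2/k2] the tangency reads [k1 P Q' = k2 Q P']. *)
Lemma lightlike_model_spiral :
  k1 <> 0 -> k2 <> 0 -> k1 <> k2 -> k1 <> - k2 -> lightlike_model a b U V.
Proof.
  intros Hk1 Hk2 H12 H12'. destruct (in_open_inhabited a b Hab) as [u0 Hu0].
  assert (Hsum : k1 + k2 <> 0) by (intros Z; apply H12'; lra).
  assert (HkP : forall w, k1 * (U w + c1 / k1) = k1 * U w + c1) by (intros w; field; auto).
  assert (HkQ : forall w, k2 * (V w + c2 / k2) = k2 * V w + c2) by (intros w; field; auto).
  assert (Hinv := ln_ratio_invariant a b U V k1 k2 (c1 / k1) (c2 / k2) u0).
  specialize (Hinv ltac:(intros w Hw; destruct (HU w Hw), (HV w Hw); auto)).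
  specialize (Hinv ltac:(intros w Hw; destruct (field_components_neq0 w Hw H12) as [N1 N2];
    split; intros Z; [apply N1; rewrite <- HkP | apply N2; rewrite <- HkQ]; rewrite Z; ring)).
  specialize (Hinv ltac:(intros w Hw; rewrite HkP, (Htan w Hw), HkQ; reflexivity) Hu0).
  set (P := fun w => U w + c1 / k1) in *. set (Q := fun w => V w + c2 / k2) in *.
  assert (HPQ : k1 * k2 * (P u0 * Q u0) > 0).
  { replace (k1 * k2 * (P u0 * Q u0)) with ((k1 * (U u0 + c1 / k1)) * (k2 * (V u0 + c2 / k2)))
      by (unfold P, Q; ring).
    rewrite HkP, HkQ.
    apply field_components_same_sign, field_components_neq0; auto. }
  assert (HP0 : P u0 <> 0) by (intros Z; rewrite Z in HPQ; lra).
  assert (HQ0 : Q u0 <> 0) by (intros Z; rewrite Z in HPQ; lra).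
  set (alpha := (k1 - k2) / (k1 + k2)).
  assert (Ha1 : 1 + alpha = 2 * k1 / (k1 + k2)) by (unfold alpha; field; auto).
  assert (Ha2 : 1 - alpha = 2 * k2 / (k1 + k2)) by (unfold alpha; field; auto).
  assert (Na1 : 1 + alpha <> 0) by (rewrite Ha1; unfold Rdiv;
    apply Rmult_integral_contrapositive_currified; [lra | apply Rinv_neq_0_compat; auto]).
  assert (Na2 : 1 - alpha <> 0) by (rewrite Ha2; unfold Rdiv;
    apply Rmult_integral_contrapositive_currified; [lra | apply Rinv_neq_0_compat; auto]).
  set (A := / ((1 + alpha) * P u0)). set (B := / ((1 - alpha) * Q u0)).
  exists A, B, (A * (c1 / k1)), (B * (c2 / k2)). split.
  - replace (A * B) with ((k1 + k2) * (k1 + k2) / (4 * (k1 * k2 * (P u0 * Q u0))))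
      by (unfold A, B; rewrite Ha1, Ha2; field; repeat split; auto).
    apply Rdiv_lt_0_compat; [apply Rsqr_pos_lt; auto | lra].
  - right; right; left. exists alpha.
    split; [intros Z; apply Na2; rewrite Z; ring | ].
    split; [intros Z; apply Na1; rewrite Z; ring | ].
    intros u Hu. destruct (Hinv u Hu) as [Hp [Hq Hlog]].
    destruct (spiral_parameter k1 k2 (P u / P u0) (Q u / Q u0)) as [s [Hs [Es1 Es2]]]; auto.
    apply (on_spiral_of_lightlike alpha _ _ s Hs); unfold alpha; [rewrite Es1 | rewrite Es2].
    + transitivity (A * P u); [unfold P; ring | ].
      unfold A. fold alpha. field. split; auto.
    + transitivity (B * Q u); [unfold Q; ring | ].
      unfold B. fold alpha. field. split; auto.
Qed.

Lemma lightlike_model_of_tangent_k1_neq0 : k1 <> 0 -> lightlike_model a b U V.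
Proof.
  intros Hk1.
  destruct (Req_dec k2 0) as [E | E]; [apply lightlike_model_exp; auto | ].
  destruct (Req_dec k2 k1) as [E2 | E2]; [apply lightlike_model_radial; auto | ].
  destruct (Req_dec k2 (- k1)) as [E3 | E3]; [apply lightlike_model_hyperbola; auto | ].
  apply lightlike_model_spiral; auto; intros Z; apply E3; lra.
Qed.

End AffineFieldTangency.

Lemma tangent_to_affine_field_sym a b U V k1 c1 k2 c2 :
  tangent_to_affine_field a b U V k1 c1 k2 c2 -> tangent_to_affine_field a b V U k2 c2 k1 c1.
Proof. intros H u Hu. symmetry. apply H, Hu. Qed.

Lemma nonzero_field_sym k1 c1 k2 c2 : nonzero_field k1 c1 k2 c2 -> nonzero_field k2 c2 k1 c1.
Proof. unfold nonzero_field. tauto. Qed.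

Lemma lightlike_model_of_tangent a b U V k1 c1 k2 c2 :
  Rbar_lt a b -> twice_derivable_on a b U -> twice_derivable_on a b V ->
  (forall u, in_open a b u -> Derive U u * Derive V u > 0) ->
  tangent_to_affine_field a b U V k1 c1 k2 c2 -> nonzero_field k1 c1 k2 c2 ->
  lightlike_model a b U V \/ lightlike_model a b V U.
Proof.
  intros Hab HU HV Hsl Htan Hnz.
  assert (Hsl' : forall u, in_open a b u -> Derive V u * Derive U u > 0)
    by (intros u Hu; rewrite Rmult_comm; auto).
  destruct (Req_dec k1 0) as [E1 | E1]; [destruct (Req_dec k2 0) as [E2 | E2] | ].
  - left. eapply lightlike_model_const_field; eauto.
  - right. eapply lightlike_model_of_tangent_k1_neq0; eauto.
    apply tangent_to_affine_field_sym; eauto.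
  - left. eapply lightlike_model_of_tangent_k1_neq0; eauto.
Qed.

(** * Similarities in light-like coordinates *)

(* [sw] exchanges the light-like coordinates, as time-reversing isometries do. *)
Definition lightlike_coords (sw : bool) (P : R * R) : R * R :=
  if sw then (eta P, xi P) else (xi P, eta P).

Definition lightlike_similarity (A B b1 b2 : R) (sw : bool) (P : R * R) : R * R :=
  of_lightlike (A * fst (lightlike_coords sw P) + b1) (B * snd (lightlike_coords sw P) + b2).

(* In (x, y) coordinates: the dilation by [sqrt (A B)] composed with the Lorentz
   matrix [(p, q; q, p)] or [(p, -q; q, -p)], where [p^2 - q^2 = 1]. *)
Lemma similarity_lightlike_similarity A B b1 b2 sw :
  A * B > 0 -> similarity (lightlike_similarity A B b1 b2 sw).
Proof.
  intros HAB. set (lam := sqrt (A * B)).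
  assert (Hlam : 0 < lam) by (apply sqrt_lt_R0; auto).
  assert (Hlam2 : lam * lam = A * B) by (apply sqrt_sqrt; lra).
  assert (HA : A <> 0) by (intros Z; rewrite Z in HAB; lra).
  assert (HB : B <> 0) by (intros Z; rewrite Z in HAB; lra).
  set (p := (A + B) / (2 * lam)). set (q := (A - B) / (2 * lam)).
  assert (Hpq : p * p - q * q = 1).
  { transitivity (A * B / (lam * lam)); [unfold p, q; field; lra | ].
    rewrite Hlam2. field. split; auto. }
  destruct sw.
  - exists lam, p, (- q), q, (- p), ((b1 + b2) / 2), ((b1 - b2) / 2).
    split; [exact Hlam | split].
    + intros v w. unfold mink; simpl.
      transitivity ((p * p - q * q) * (fst v * fst w - snd v * snd w)); [ring | rewrite Hpq; ring].
    + intros [x y]. unfold lightlike_similarity, lightlike_coords, of_lightlike, xi, eta; simpl.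
      unfold p, q. f_equal; field; lra.
  - exists lam, p, q, q, p, ((b1 + b2) / 2), ((b1 - b2) / 2).
    split; [exact Hlam | split].
    + intros v w. unfold mink; simpl.
      transitivity ((p * p - q * q) * (fst v * fst w - snd v * snd w)); [ring | rewrite Hpq; ring].
    + intros [x y]. unfold lightlike_similarity, lightlike_coords, of_lightlike, xi, eta; simpl.
      unfold p, q. f_equal; field; lra.
Qed.

Lemma mink_preserving_matrix p q r s :
  (forall v w : R * R,
     mink (p * fst v + q * snd v, r * fst v + s * snd v)
          (p * fst w + q * snd w, r * fst w + s * snd w) = mink v w) ->
  p * p - r * r = 1 /\ ((s = p /\ q = r) \/ (s = - p /\ q = - r)).
Proof.
  intros H.
  assert (H1 := H (1, 0) (1, 0)). assert (H2 := H (0, 1) (0, 1)). assert (H3 := H (1, 0) (0, 1)).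
  unfold mink in *; simpl in *.
  assert (E1 : p * p - r * r = 1) by lra.
  assert (E2 : q * q - s * s = -1) by lra.
  assert (E3 : p * q = r * s) by lra.
  split; [exact E1 | ].
  assert (Hp : p <> 0) by (intros Z; rewrite Z in E1; nra).
  assert (Es : s * s = p * p).
  { assert (p * p * (q * q) = r * r * (s * s))
      by (transitivity ((p * q) * (p * q)); [ring | rewrite E3; ring]).
    nra. }
  assert (Hs : (s - p) * (s + p) = 0) by lra.
  destruct (Rmult_integral _ _ Hs); [left | right]; split;
    try lra; apply (Rmult_eq_reg_l p); auto; nra.
Qed.

Lemma similarity_lightlike_form S : similarity S ->
  exists A B b1 b2 (sw : bool), A * B <> 0 /\
    forall P, xi (S P) = A * fst (lightlike_coords sw P) + b1 /\
              eta (S P) = B * snd (lightlike_coords sw P) + b2.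
Proof.
  intros [lam [p [q [r [s [b1 [b2 [Hlam [Hmink HS]]]]]]]]].
  destruct (mink_preserving_matrix p q r s Hmink) as [Hpr [[-> ->] | [-> ->]]].
  - exists (lam * (p + r)), (lam * (p - r)), (b1 + b2), (b1 - b2), false. split.
    + replace (lam * (p + r) * (lam * (p - r))) with (lam * lam * (p * p - r * r)) by ring.
      rewrite Hpr. apply Rgt_not_eq. nra.
    + intros P. rewrite HS. unfold lightlike_coords, xi, eta; simpl. split; ring.
  - exists (lam * (p + r)), (lam * (p - r)), (b1 + b2), (b1 - b2), true. split.
    + replace (lam * (p + r) * (lam * (p - r))) with (lam * lam * (p * p - r * r)) by ring.
      rewrite Hpr. apply Rgt_not_eq. nra.
    + intros P. rewrite HS. unfold lightlike_coords, xi, eta; simpl. split; ring.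
Qed.

Lemma similar_model_of_lightlike_model a b X (sw : bool) :
  lightlike_model a b (fun u => fst (lightlike_coords sw (X u)))
                      (fun u => snd (lightlike_coords sw (X u))) ->
  exists S, similarity S /\ model_curve a b (fun u => S (X u)).
Proof.
  intros [A [B [b1 [b2 [HAB Hmodel]]]]].
  exists (lightlike_similarity A B b1 b2 sw).
  split; [apply similarity_lightlike_similarity, HAB | exact Hmodel].
Qed.

(** * Space-like curves in light-like coordinates *)

Lemma ex_derive_xi (F : R -> R * R) t :
  ex_derive (fun s => fst (F s)) t -> ex_derive (fun s => snd (F s)) t ->
  ex_derive (fun s => xi (F s)) t.
Proof. intros. apply (ex_derive_plus (fun s => fst (F s)) (fun s => snd (F s))); auto. Qed.

Lemma ex_derive_eta (F : R -> R * R) t :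
  ex_derive (fun s => fst (F s)) t -> ex_derive (fun s => snd (F s)) t ->
  ex_derive (fun s => eta (F s)) t.
Proof. intros. apply (ex_derive_minus (fun s => fst (F s)) (fun s => snd (F s))); auto. Qed.

Lemma xi_velocity (F : R -> R * R) t :
  ex_derive (fun s => fst (F s)) t -> ex_derive (fun s => snd (F s)) t ->
  xi (Derive (fun s => fst (F s)) t, Derive (fun s => snd (F s)) t) = Derive (fun s => xi (F s)) t.
Proof.
  intros. unfold xi at 2. symmetry. apply (Derive_plus (fun s => fst (F s)) (fun s => snd (F s))); auto.
Qed.

Lemma eta_velocity (F : R -> R * R) t :
  ex_derive (fun s => fst (F s)) t -> ex_derive (fun s => snd (F s)) t ->
  eta (Derive (fun s => fst (F s)) t, Derive (fun s => snd (F s)) t) = Derive (fun s => eta (F s)) t.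
Proof.
  intros. unfold eta at 2. symmetry. apply (Derive_minus (fun s => fst (F s)) (fun s => snd (F s))); auto.
Qed.

Lemma mink_diag v : mink v v = xi v * eta v.
Proof. unfold mink, xi, eta. ring. Qed.

Lemma space_like_curve_derivable a b X u : space_like_curve a b X -> in_open a b u ->
  ex_derive (fun s => fst (X s)) u /\ ex_derive (fun s => snd (X s)) u.
Proof. intros [_ [Hn _]] Hu. exact (Hn 1%nat u Hu). Qed.

Lemma space_like_curve_lightlike a b X : space_like_curve a b X ->
  twice_derivable_on a b (fun u => xi (X u)) /\ twice_derivable_on a b (fun u => eta (X u)) /\
  (forall u, in_open a b u -> Derive (fun s => xi (X s)) u * Derive (fun s => eta (X s)) u > 0).
Proof.
  intros Hcurve. destruct Hcurve as [Hab [Hn Hm]].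
  assert (D1 : forall u, in_open a b u ->
            ex_derive (fun s => fst (X s)) u /\ ex_derive (fun s => snd (X s)) u)
    by (intros u Hu; exact (Hn 1%nat u Hu)).
  assert (D2 : forall u, in_open a b u ->
            ex_derive (Derive (fun s => fst (X s))) u /\ ex_derive (Derive (fun s => snd (X s))) u)
    by (intros u Hu; exact (Hn 2%nat u Hu)).
  split; [ | split].
  - intros u Hu. destruct (D1 u Hu). split; [apply ex_derive_xi; auto | ].
    apply (ex_derive_ext_loc (fun w => Derive (fun s => fst (X s)) w + Derive (fun s => snd (X s)) w)).
    + apply (filter_imp (in_open a b)); [ | apply in_open_locally; auto].
      intros w Hw. destruct (D1 w Hw). rewrite <- xi_velocity; auto.
    + destruct (D2 u Hu).
      apply (ex_derive_plus (Derive (fun s => fst (X s))) (Derive (fun s => snd (X s)))); auto.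
  - intros u Hu. destruct (D1 u Hu). split; [apply ex_derive_eta; auto | ].
    apply (ex_derive_ext_loc (fun w => Derive (fun s => fst (X s)) w - Derive (fun s => snd (X s)) w)).
    + apply (filter_imp (in_open a b)); [ | apply in_open_locally; auto].
      intros w Hw. destruct (D1 w Hw). rewrite <- eta_velocity; auto.
    + destruct (D2 u Hu).
      apply (ex_derive_minus (Derive (fun s => fst (X s))) (Derive (fun s => snd (X s)))); auto.
  - intros u Hu. destruct (D1 u Hu).
    rewrite <- xi_velocity, <- eta_velocity, <- mink_diag by auto. apply Hm, Hu.
Qed.

(** * Model curves are tangent to affine fields *)

Lemma tangent_field_of_line a b U V A B b1 b2 :
  (forall u, in_open a b u -> ex_derive U u /\ ex_derive V u) ->
  (forall u, in_open a b u -> A * U u + b1 = B * V u + b2) ->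
  tangent_to_affine_field a b U V 0 B 0 A.
Proof.
  intros HD HM u Hu. destruct (HD u Hu).
  assert (Z : A * Derive U u - B * Derive V u = 0).
  { apply (is_derive_vanishing_on a b (fun w => A * U w + b1 - (B * V w + b2)) u); auto.
    - intros w Hw. rewrite HM; auto. ring.
    - auto_derive; [auto | simpl_fun; ring]. }
  lra.
Qed.

Lemma tangent_field_of_hyperbola a b U V A B b1 b2 :
  (forall u, in_open a b u -> ex_derive U u /\ ex_derive V u) ->
  (forall u, in_open a b u -> (A * U u + b1) * (B * V u + b2) = -1) ->
  tangent_to_affine_field a b U V (A * B) (B * b1) (- (A * B)) (- (A * b2)).
Proof.
  intros HD HM u Hu. destruct (HD u Hu).
  assert (Z : A * Derive U u * (B * V u + b2) + (A * U u + b1) * (B * Derive V u) = 0).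
  { apply (is_derive_vanishing_on a b (fun w => (A * U w + b1) * (B * V w + b2) + 1) u); auto.
    - intros w Hw. rewrite HM; auto. ring.
    - auto_derive; [auto | simpl_fun; ring]. }
  lra.
Qed.

Lemma tangent_field_of_exp_curve a b U V A B b1 b2 :
  (forall u, in_open a b u -> ex_derive U u /\ ex_derive V u) ->
  (forall u, in_open a b u -> A * U u + b1 = exp (2 * (B * V u + b2))) ->
  tangent_to_affine_field a b U V (2 * (A * B)) (2 * (B * b1)) 0 A.
Proof.
  intros HD HM u Hu. destruct (HD u Hu).
  assert (Z : A * Derive U u - 2 * (B * Derive V u) * exp (2 * (B * V u + b2)) = 0).
  { apply (is_derive_vanishing_on a b (fun w => A * U w + b1 - exp (2 * (B * V w + b2))) u); auto.
    - intros w Hw. rewrite HM; auto. ring.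
    - auto_derive; [auto | simpl_fun; ring]. }
  rewrite <- HM in Z; auto. lra.
Qed.

(* On the spiral [(1 - alpha) ln ((1 + alpha) x) = (1 + alpha) ln ((1 - alpha) e)]. *)
Lemma tangent_field_of_spiral a b U V A B b1 b2 alpha :
  (forall u, in_open a b u -> ex_derive U u /\ ex_derive V u) ->
  alpha <> 1 -> alpha <> -1 ->
  (forall u, in_open a b u -> exists s, s > 0 /\
     A * U u + b1 = Rpower s (1 + alpha) / (1 + alpha) /\
     B * V u + b2 = Rpower s (1 - alpha) / (1 - alpha)) ->
  tangent_to_affine_field a b U V
    ((1 + alpha) * (A * B)) ((1 + alpha) * (B * b1)) ((1 - alpha) * (A * B)) ((1 - alpha) * (A * b2)).
Proof.
  intros HD H1 H2 HM.
  assert (N1 : 1 + alpha <> 0) by (intros Z; apply H2; lra).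
  assert (N2 : 1 - alpha <> 0) by (intros Z; apply H1; lra).
  set (x := fun w => (1 + alpha) * (A * U w + b1)).
  set (e := fun w => (1 - alpha) * (B * V w + b2)).
  assert (Hlog : forall u, in_open a b u ->
            x u > 0 /\ e u > 0 /\ (1 - alpha) * ln (x u) - (1 + alpha) * ln (e u) = 0).
  { intros u Hu. destruct (HM u Hu) as [s [Hs [E1 E2]]]. unfold x, e. rewrite E1, E2.
    replace ((1 + alpha) * (Rpower s (1 + alpha) / (1 + alpha))) with (Rpower s (1 + alpha))
      by (field; auto).
    replace ((1 - alpha) * (Rpower s (1 - alpha) / (1 - alpha))) with (Rpower s (1 - alpha))
      by (field; auto).
    unfold Rpower. rewrite !ln_exp. split; [apply exp_pos | split; [apply exp_pos | ring]]. }
  intros u Hu. destruct (HD u Hu). destruct (Hlog u Hu) as [Hx [He _]].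
  assert (Z : (1 - alpha) * ((1 + alpha) * (A * Derive U u)) / x u
              - (1 + alpha) * ((1 - alpha) * (B * Derive V u)) / e u = 0).
  { apply (is_derive_vanishing_on a b
             (fun w => (1 - alpha) * ln (x w) - (1 + alpha) * ln (e w)) u); auto.
    - intros w Hw. apply (Hlog w Hw).
    - unfold x, e in *. auto_derive; [repeat split; auto | simpl_fun; unfold Rdiv; ring]. }
  unfold x, e in *.
  assert (Hx0 : A * U u + b1 <> 0) by (intros E; rewrite E in Hx; lra).
  assert (He0 : B * V u + b2 <> 0) by (intros E; rewrite E in He; lra).
  apply Rminus_diag_uniq.
  transitivity ((((1 - alpha) * ((1 + alpha) * (A * Derive U u)) / ((1 + alpha) * (A * U u + b1))
                 - (1 + alpha) * ((1 - alpha) * (B * Derive V u)) / ((1 - alpha) * (B * V u + b2))))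
                * (- (A * U u + b1) * (B * V u + b2))); [field; auto | rewrite Z; ring].
Qed.

Lemma tangent_field_of_model_curve a b U V Y A B b1 b2 :
  (forall u, in_open a b u -> ex_derive U u /\ ex_derive V u) -> A * B <> 0 ->
  (forall u, in_open a b u -> xi (Y u) = A * U u + b1 /\ eta (Y u) = B * V u + b2) ->
  model_curve a b Y ->
  exists k1 c1 k2 c2, nonzero_field k1 c1 k2 c2 /\ tangent_to_affine_field a b U V k1 c1 k2 c2.
Proof.
  intros HD HAB HY Hmodel.
  assert (HA : A <> 0) by (intros Z; apply HAB; rewrite Z; ring).
  destruct Hmodel as [Hc | [Hc | [[alpha [H1 [H2 Hc]]] | Hc]]].
  - exists 0, B, 0, A. split; [unfold nonzero_field; tauto | ].
    apply tangent_field_of_line with b1 b2; auto.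
    intros u Hu. destruct (HY u Hu) as [<- <-]. specialize (Hc u Hu).
    unfold on_line, xi, eta in *. lra.
  - eexists _, _, _, _. split; [ | apply (tangent_field_of_hyperbola a b U V A B b1 b2); auto].
    + unfold nonzero_field; tauto.
    + intros u Hu. destruct (HY u Hu) as [<- <-]. apply Hc, Hu.
  - eexists _, _, _, _. split; [ | apply (tangent_field_of_spiral a b U V A B b1 b2 alpha); auto].
    + intros [Z _]. apply Rmult_integral in Z. destruct Z as [Z | Z]; [apply H2 | apply HAB]; lra.
    + intros u Hu. destruct (HY u Hu) as [<- <-]. apply Hc, Hu.
  - eexists _, _, _, _. split; [ | apply (tangent_field_of_exp_curve a b U V A B b1 b2); auto].
    + intros [Z _]. apply HAB. lra.
    + intros u Hu. destruct (HY u Hu) as [<- <-]. apply Hc, Hu.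
Qed.

Lemma tangent_field_of_similar_model a b X S :
  space_like_curve a b X -> similarity S -> model_curve a b (fun u => S (X u)) ->
  exists k1 c1 k2 c2, nonzero_field k1 c1 k2 c2 /\
    tangent_to_affine_field a b (fun u => xi (X u)) (fun u => eta (X u)) k1 c1 k2 c2.
Proof.
  intros Hcurve HS Hmodel.
  destruct (similarity_lightlike_form S HS) as [A [B [b1 [b2 [sw [HAB HSP]]]]]].
  assert (HD : forall u, in_open a b u -> ex_derive (fun u => xi (X u)) u /\ ex_derive (fun u => eta (X u)) u).
  { intros u Hu. destruct (space_like_curve_derivable a b X u Hcurve Hu).
    split; [apply ex_derive_xi | apply ex_derive_eta]; auto. }
  destruct sw.
  - destruct (tangent_field_of_model_curve a b (fun u => eta (X u)) (fun u => xi (X u))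
                (fun u => S (X u)) A B b1 b2) as [k1 [c1 [k2 [c2 [Hnz Htan]]]]]; auto.
    + intros u Hu. destruct (HD u Hu); auto.
    + exists k2, c2, k1, c1. split; [apply nonzero_field_sym | apply tangent_to_affine_field_sym]; auto.
  - apply (tangent_field_of_model_curve a b _ _ (fun u => S (X u)) A B b1 b2); auto.
Qed.

(** * Invariance under a self-similar motion *)

Lemma xi_motion f g H P t : xi (motion f g H P t) = g t * exp (f t) * xi P + xi (H t).
Proof. unfold motion, hmul, ehf, cosh, sinh, xi; simpl. field. Qed.

Lemma eta_motion f g H P t : eta (motion f g H P t) = g t * exp (- f t) * eta P + eta (H t).
Proof. unfold motion, hmul, ehf, cosh, sinh, eta; simpl. field. Qed.

Lemma ex_derive_motion_time f g H P t :
  ex_derive f t -> ex_derive g t ->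
  ex_derive (fun s => fst (H s)) t -> ex_derive (fun s => snd (H s)) t ->
  ex_derive (fun s => fst (motion f g H P s)) t /\ ex_derive (fun s => snd (motion f g H P s)) t.
Proof.
  intros Hf Hg HH1 HH2. unfold motion, hmul, ehf, cosh, sinh; simpl.
  set (H1 := fun s => fst (H s)) in *. set (H2 := fun s => snd (H s)) in *.
  change (ex_derive (fun s => g s * ((exp (f s) + exp (- f s)) / 2 * fst P
                                     + (exp (f s) - exp (- f s)) / 2 * snd P) + H1 s) t /\
          ex_derive (fun s => g s * ((exp (f s) + exp (- f s)) / 2 * snd P
                                     + (exp (f s) - exp (- f s)) / 2 * fst P) + H2 s) t).
  split; auto_derive; repeat split; auto.
Qed.

Lemma ex_derive_motion_param f g H X t u :
  ex_derive (fun s => fst (X s)) u -> ex_derive (fun s => snd (X s)) u ->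
  ex_derive (fun s => fst (motion f g H (X s) t)) u /\
  ex_derive (fun s => snd (motion f g H (X s) t)) u.
Proof.
  intros HX1 HX2. unfold motion, hmul, ehf, cosh, sinh; simpl.
  set (X1 := fun s => fst (X s)) in *. set (X2 := fun s => snd (X s)) in *.
  change (ex_derive (fun s => g t * ((exp (f t) + exp (- f t)) / 2 * X1 s
                                     + (exp (f t) - exp (- f t)) / 2 * X2 s) + fst (H t)) u /\
          ex_derive (fun s => g t * ((exp (f t) + exp (- f t)) / 2 * X2 s
                                     + (exp (f t) - exp (- f t)) / 2 * X1 s) + snd (H t)) u).
  split; auto_derive; repeat split; auto.
Qed.

Section MotionDerivatives.

Variables (f g : R -> R) (H : R -> R * R) (X : R -> R * R) (u t : R).
Hypothesis HX1 : ex_derive (fun s => fst (X s)) u.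
Hypothesis HX2 : ex_derive (fun s => snd (X s)) u.
Hypothesis Hf : ex_derive f t.
Hypothesis Hg : ex_derive g t.
Hypothesis HH1 : ex_derive (fun s => fst (H s)) t.
Hypothesis HH2 : ex_derive (fun s => snd (H s)) t.

Let time_velocity : R * R :=
  (Derive (fun s => fst (motion f g H (X u) s)) t, Derive (fun s => snd (motion f g H (X u) s)) t).
Let tangent : R * R := dcurve (fun s => motion f g H (X s) t) u.

Lemma xi_time_velocity :
  xi time_velocity =
  (Derive g t + g t * Derive f t) * exp (f t) * xi (X u) + Derive (fun s => xi (H s)) t.
Proof.
  destruct (ex_derive_motion_time f g H (X u) t) as [D1 D2]; auto.
  unfold time_velocity. rewrite xi_velocity by auto.
  assert (HxH := ex_derive_xi H t HH1 HH2). set (xH := fun s => xi (H s)) in *.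
  rewrite (Derive_ext _ (fun s => g s * exp (f s) * xi (X u) + xH s)) by apply xi_motion.
  apply is_derive_unique. auto_derive; [repeat split; auto | simpl_fun; ring].
Qed.

Lemma eta_time_velocity :
  eta time_velocity =
  (Derive g t - g t * Derive f t) * exp (- f t) * eta (X u) + Derive (fun s => eta (H s)) t.
Proof.
  destruct (ex_derive_motion_time f g H (X u) t) as [D1 D2]; auto.
  unfold time_velocity. rewrite eta_velocity by auto.
  assert (HeH := ex_derive_eta H t HH1 HH2). set (eH := fun s => eta (H s)) in *.
  rewrite (Derive_ext _ (fun s => g s * exp (- f s) * eta (X u) + eH s)) by apply eta_motion.
  apply is_derive_unique. auto_derive; [repeat split; auto | simpl_fun; ring].
Qed.

Lemma xi_tangent : xi tangent = g t * exp (f t) * Derive (fun s => xi (X s)) u.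
Proof.
  destruct (ex_derive_motion_param f g H X t u) as [D1 D2]; auto.
  unfold tangent, dcurve. rewrite xi_velocity by auto.
  assert (HxX := ex_derive_xi X u HX1 HX2). set (xX := fun s => xi (X s)) in *.
  rewrite (Derive_ext _ (fun s => g t * exp (f t) * xX s + xi (H t))) by (intros; apply xi_motion).
  apply is_derive_unique. auto_derive; [auto | simpl_fun; ring].
Qed.

Lemma eta_tangent : eta tangent = g t * exp (- f t) * Derive (fun s => eta (X s)) u.
Proof.
  destruct (ex_derive_motion_param f g H X t u) as [D1 D2]; auto.
  unfold tangent, dcurve. rewrite eta_velocity by auto.
  assert (HeX := ex_derive_eta X u HX1 HX2). set (eX := fun s => eta (X s)) in *.
  rewrite (Derive_ext _ (fun s => g t * exp (- f t) * eX s + eta (H t))) by (intros; apply eta_motion).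
  apply is_derive_unique. auto_derive; [auto | simpl_fun; ring].
Qed.

End MotionDerivatives.

Lemma mink_unit_normal_eq0 v w : xi v * eta v > 0 ->
  (mink w (unit_normal v) = 0 <-> xi w * eta v = eta w * xi v).
Proof.
  intros Hv. set (n := sqrt (mink v v)).
  assert (Hn : 0 < n) by (apply sqrt_lt_R0; rewrite mink_diag; exact Hv).
  assert (E : xi w * eta v - eta w * xi v = - 2 * n * mink w (unit_normal v)).
  { unfold unit_normal. cbv zeta. fold n. unfold mink, xi, eta; simpl. field. lra. }
  split; intros Z.
  - rewrite Z, Rmult_0_r in E. lra.
  - assert (Z' : - 2 * n * mink w (unit_normal v) = 0) by lra.
    destruct (Rmult_integral _ _ Z') as [Z2 | Z2]; [lra | exact Z2].
Qed.

(* The invariance condition at [(u, t)] is the tangency of the curve to the affine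
   field generating the motion at time [t]. *)
Lemma invariant_at_iff_tangent f g H X u t :
  ex_derive (fun s => fst (X s)) u -> ex_derive (fun s => snd (X s)) u ->
  ex_derive f t -> ex_derive g t ->
  ex_derive (fun s => fst (H s)) t -> ex_derive (fun s => snd (H s)) t ->
  g t <> 0 -> Derive (fun s => xi (X s)) u * Derive (fun s => eta (X s)) u > 0 ->
  (mink (Derive (fun s => fst (motion f g H (X u) s)) t,
         Derive (fun s => snd (motion f g H (X u) s)) t)
        (unit_normal (dcurve (fun s => motion f g H (X s) t) u)) = 0 <->
   ((Derive g t + g t * Derive f t) * g t * xi (X u) + Derive (fun s => xi (H s)) t * g t / exp (f t))
     * Derive (fun s => eta (X s)) u =
   ((Derive g t - g t * Derive f t) * g t * eta (X u) + Derive (fun s => eta (H s)) t * g t * exp (f t))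
     * Derive (fun s => xi (X s)) u).
Proof.
  intros HX1 HX2 Hf Hg HH1 HH2 Hg0 Hsl.
  assert (HE : 0 < exp (f t)) by apply exp_pos.
  rewrite mink_unit_normal_eq0.
  2: { rewrite xi_tangent, eta_tangent, exp_Ropp by auto.
       replace (g t * exp (f t) * Derive (fun s => xi (X s)) u
                * (g t * / exp (f t) * Derive (fun s => eta (X s)) u))
         with (g t * g t * (Derive (fun s => xi (X s)) u * Derive (fun s => eta (X s)) u))
         by (field; lra).
       apply Rmult_lt_0_compat; [apply Rsqr_pos_lt | ]; assumption. }
  rewrite xi_time_velocity, eta_time_velocity, xi_tangent, eta_tangent, exp_Ropp by auto.
  match goal with |- (?l1 = ?r1 <-> ?l2 = ?r2) =>
    replace l1 with l2 by (field; lra); replace r1 with r2 by (field; lra) end.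
  reflexivity.
Qed.

Lemma pair_eq0_of_lightlike P : xi P = 0 -> eta P = 0 -> P = (0, 0).
Proof. destruct P as [x y]. unfold xi, eta; simpl. intros. f_equal; lra. Qed.

(* Where [g] does not vanish the generator is nonzero somewhere: otherwise [g^2]
   has zero derivative, so [g = 1] and then [f], [H] are constant as well. *)
Lemma motion_nonstationary c d f g H :
  self_similar_motion c d f g H -> nontrivial_motion c d f g H ->
  exists t, in_open c d t /\ g t <> 0 /\
    ~ (Derive g t = 0 /\ Derive f t = 0 /\
       Derive (fun s => xi (H s)) t = 0 /\ Derive (fun s => eta (H s)) t = 0).
Proof.
  intros [Hin0 [Hdiff [Hf0 [Hg0 HH0]]]] [t1 [Ht1 Hne]].
  apply NNPP. intros Hstat.
  assert (Hst : forall t, in_open c d t -> g t <> 0 ->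
            Derive g t = 0 /\ Derive f t = 0 /\
            Derive (fun s => xi (H s)) t = 0 /\ Derive (fun s => eta (H s)) t = 0)
    by (intros t Ht Hg; apply NNPP; intros N; apply Hstat; exists t; auto).
  assert (Hgg : forall t, in_open c d t -> g t * g t = 1).
  { intros t Ht. transitivity (g 0 * g 0); [ | rewrite Hg0; ring].
    apply (derive_zero_const_on c d (fun s => g s * g s)); auto.
    intros w Hw. destruct (Hdiff w Hw) as [_ [Dg _]].
    assert (Hd : 2 * g w * Derive g w = 0).
    { destruct (Req_dec (g w) 0) as [Z | Z]; [rewrite Z; ring | ].
      rewrite (proj1 (Hst w Hw Z)). ring. }
    rewrite <- Hd. auto_derive; [auto | simpl_fun; ring]. }
  assert (Hst' : forall t, in_open c d t ->
            Derive g t = 0 /\ Derive f t = 0 /\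
            Derive (fun s => xi (H s)) t = 0 /\ Derive (fun s => eta (H s)) t = 0).
  { intros t Ht. apply Hst; auto. intros Z. specialize (Hgg t Ht). rewrite Z in Hgg. lra. }
  assert (Hconst : forall F, (forall t, in_open c d t -> ex_derive F t) ->
            (forall t, in_open c d t -> Derive F t = 0) -> F t1 = F 0).
  { intros F HF HF0. apply (derive_zero_const_on c d F); auto.
    intros w Hw. rewrite <- (HF0 w Hw). apply Derive_correct, HF, Hw. }
  destruct Hne as [N | [N | N]]; apply N.
  - rewrite <- Hf0. apply Hconst; intros t Ht; [apply Hdiff | apply Hst']; auto.
  - rewrite <- Hg0. apply Hconst; intros t Ht; [apply Hdiff | apply Hst']; auto.
  - apply pair_eq0_of_lightlike.
    + transitivity (xi (H 0)); [ | rewrite HH0; unfold xi; simpl; ring].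
      apply (Hconst (fun s => xi (H s))); intros t Ht; [ | apply Hst'; auto].
      destruct (Hdiff t Ht) as [_ [_ [D1 D2]]]. apply ex_derive_xi; auto.
    + transitivity (eta (H 0)); [ | rewrite HH0; unfold eta; simpl; ring].
      apply (Hconst (fun s => eta (H s))); intros t Ht; [ | apply Hst'; auto].
      destruct (Hdiff t Ht) as [_ [_ [D1 D2]]]. apply ex_derive_eta; auto.
Qed.

Lemma nonzero_field_generator gt dg df dxH deH E : gt <> 0 -> 0 < E ->
  ~ (dg = 0 /\ df = 0 /\ dxH = 0 /\ deH = 0) ->
  nonzero_field ((dg + gt * df) * gt) (dxH * gt / E) ((dg - gt * df) * gt) (deH * gt * E).
Proof.
  intros Hg HE Hn [Z1 [Z2 [Z3 Z4]]]. apply Hn. repeat split.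
  - replace dg with (((dg + gt * df) * gt + (dg - gt * df) * gt) / (2 * gt)) by (field; auto).
    rewrite Z1, Z3. field; auto.
  - replace df with (((dg + gt * df) * gt - (dg - gt * df) * gt) / (2 * gt * gt)) by (field; auto).
    rewrite Z1, Z3. field; auto.
  - replace dxH with (dxH * gt / E * E / gt) by (field; split; lra || auto).
    rewrite Z2. field; auto.
  - replace deH with (deH * gt * E / E / gt) by (field; split; lra || auto).
    rewrite Z4. field; split; lra || auto.
Qed.

Lemma tangent_field_of_invariant a b X : space_like_curve a b X -> invariant_nontrivial a b X ->
  exists k1 c1 k2 c2, nonzero_field k1 c1 k2 c2 /\
    tangent_to_affine_field a b (fun u => xi (X u)) (fun u => eta (X u)) k1 c1 k2 c2.
Proof.
  intros Hcurve [c [d [f [g [H [Hmot [Hnt Hinv]]]]]]].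
  destruct (motion_nonstationary c d f g H Hmot Hnt) as [t [Ht [Hg Hns]]].
  destruct Hmot as [_ [Hdiff _]]. destruct (Hdiff t Ht) as [Df [Dg [DH1 DH2]]].
  destruct (space_like_curve_lightlike a b X Hcurve) as [_ [_ Hsl]].
  eexists _, _, _, _. split.
  - apply (nonzero_field_generator (g t) _ _ _ _ (exp (f t)) Hg (exp_pos _) Hns).
  - intros u Hu. destruct (space_like_curve_derivable a b X u Hcurve Hu) as [HX1 HX2].
    apply (invariant_at_iff_tangent f g H X u t); auto.
Qed.

(** * The flow of an affine field *)

Definition primitive_exp (k t : R) : R := if Req_EM_T k 0 then t else (exp (k * t) - 1) / k.

Lemma is_derive_primitive_exp k t : is_derive (primitive_exp k) t (exp (k * t)).
Proof.
  unfold primitive_exp. destruct (Req_EM_T k 0) as [-> | Hk].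
  - rewrite Rmult_0_l, exp_0. auto_derive; reflexivity.
  - auto_derive; [auto | field; auto].
Qed.

Lemma primitive_exp_0 k : primitive_exp k 0 = 0.
Proof.
  unfold primitive_exp. destruct (Req_EM_T k 0); [reflexivity | ].
  rewrite Rmult_0_r, exp_0. field; auto.
Qed.

(* The one-parameter group generated by the field [(k1 x + c1, k2 y + c2)] in
   light-like coordinates. *)
Definition flow_scale (k1 k2 t : R) : R := exp ((k1 + k2) / 2 * t).
Definition flow_rapidity (k1 k2 t : R) : R := (k1 - k2) / 2 * t.
Definition flow_translation (k1 c1 k2 c2 t : R) : R * R :=
  of_lightlike (c1 * primitive_exp k1 t) (c2 * primitive_exp k2 t).

Section Flow.

Variables k1 c1 k2 c2 : R.

Lemma is_derive_flow_scale t : is_derive (flow_scale k1 k2) t ((k1 + k2) / 2 * flow_scale k1 k2 t).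
Proof. unfold flow_scale. auto_derive; [auto | ring]. Qed.

Lemma is_derive_flow_rapidity t : is_derive (flow_rapidity k1 k2) t ((k1 - k2) / 2).
Proof. unfold flow_rapidity. auto_derive; [auto | ring]. Qed.

Lemma ex_derive_flow_translation t :
  ex_derive (fun s => fst (flow_translation k1 c1 k2 c2 s)) t /\
  ex_derive (fun s => snd (flow_translation k1 c1 k2 c2 s)) t.
Proof.
  assert (DP : forall k, ex_derive (primitive_exp k) t)
    by (intros k; eexists; apply is_derive_primitive_exp).
  unfold flow_translation, of_lightlike; simpl. split; auto_derive; repeat split; auto.
Qed.

Lemma Derive_xi_flow_translation t :
  Derive (fun s => xi (flow_translation k1 c1 k2 c2 s)) t = c1 * exp (k1 * t).
Proof.
  rewrite (Derive_ext _ (fun s => c1 * primitive_exp k1 s)) by (intros s; apply xi_of_lightlike).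
  apply is_derive_unique. assert (P := is_derive_primitive_exp k1 t).
  auto_derive; [eexists; exact P | simpl_fun; rewrite (is_derive_unique _ _ _ P); ring].
Qed.

Lemma Derive_eta_flow_translation t :
  Derive (fun s => eta (flow_translation k1 c1 k2 c2 s)) t = c2 * exp (k2 * t).
Proof.
  rewrite (Derive_ext _ (fun s => c2 * primitive_exp k2 s)) by (intros s; apply eta_of_lightlike).
  apply is_derive_unique. assert (P := is_derive_primitive_exp k2 t).
  auto_derive; [eexists; exact P | simpl_fun; rewrite (is_derive_unique _ _ _ P); ring].
Qed.

Lemma flow_self_similar : self_similar_motion m_infty p_infty
  (flow_rapidity k1 k2) (flow_scale k1 k2) (flow_translation k1 c1 k2 c2).
Proof.
  split; [split; simpl; auto | split; [ | split; [ | split]]].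
  - intros t _. destruct (ex_derive_flow_translation t).
    repeat split; auto; eexists; [apply is_derive_flow_rapidity | apply is_derive_flow_scale].
  - unfold flow_rapidity. ring.
  - unfold flow_scale. rewrite Rmult_0_r. apply exp_0.
  - unfold flow_translation. rewrite !primitive_exp_0, !Rmult_0_r.
    unfold of_lightlike. f_equal; field.
Qed.

Lemma flow_nontrivial : nonzero_field k1 c1 k2 c2 -> nontrivial_motion m_infty p_infty
  (flow_rapidity k1 k2) (flow_scale k1 k2) (flow_translation k1 c1 k2 c2).
Proof.
  intros Hnz. exists 1. split; [split; simpl; auto | ].
  destruct (Req_dec k1 k2) as [E | E];
    [ | left; unfold flow_rapidity; intros Z; apply E; lra].
  destruct (Req_dec k1 0) as [E0 | E0].
  - right; right. intros Z. apply Hnz.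
    assert (Hx := f_equal xi Z). assert (He := f_equal eta Z).
    unfold flow_translation in Hx, He.
    rewrite xi_of_lightlike in Hx. rewrite eta_of_lightlike in He.
    unfold primitive_exp in Hx, He. rewrite <- E, E0 in *.
    destruct (Req_EM_T 0 0) as [_ | C]; [ | lra].
    unfold xi, eta in Hx, He; simpl in Hx, He. repeat split; auto; lra.
  - right; left. unfold flow_scale. intros Z.
    assert (Z' : (k1 + k2) / 2 * 1 = 0) by (apply exp_inv; rewrite exp_0; exact Z).
    apply E0. lra.
Qed.

End Flow.

(* The generator of the flow at time [t] is the given field scaled by [g t ^ 2]. *)
Lemma invariant_of_tangent_field a b X k1 c1 k2 c2 : space_like_curve a b X ->
  nonzero_field k1 c1 k2 c2 ->
  tangent_to_affine_field a b (fun u => xi (X u)) (fun u => eta (X u)) k1 c1 k2 c2 ->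
  invariant_nontrivial a b X.
Proof.
  intros Hcurve Hnz Htan.
  destruct (space_like_curve_lightlike a b X Hcurve) as [_ [_ Hsl]].
  exists m_infty, p_infty, (flow_rapidity k1 k2), (flow_scale k1 k2), (flow_translation k1 c1 k2 c2).
  split; [apply flow_self_similar | split; [apply flow_nontrivial, Hnz | ]].
  intros u t Hu _. destruct (space_like_curve_derivable a b X u Hcurve Hu) as [HX1 HX2].
  destruct (ex_derive_flow_translation k1 c1 k2 c2 t) as [DH1 DH2].
  assert (HG : 0 < flow_scale k1 k2 t) by apply exp_pos.
  apply invariant_at_iff_tangent; auto;
    [eexists; apply is_derive_flow_rapidity | eexists; apply is_derive_flow_scale | lra | ].
  rewrite (is_derive_unique _ _ _ (is_derive_flow_scale k1 k2 t)),
    (is_derive_unique _ _ _ (is_derive_flow_rapidity k1 k2 t)),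
    Derive_xi_flow_translation, Derive_eta_flow_translation.
  set (g := flow_scale k1 k2) in *. set (f := flow_rapidity k1 k2).
  assert (HE : 0 < exp (f t)) by apply exp_pos.
  assert (Hx1 : exp (k1 * t) = g t * exp (f t))
    by (unfold g, f, flow_scale, flow_rapidity; rewrite <- exp_plus; f_equal; field).
  assert (Hx2 : exp (k2 * t) = g t / exp (f t))
    by (unfold g, f, flow_scale, flow_rapidity, Rdiv;
        rewrite <- exp_Ropp, <- exp_plus; f_equal; field).
  rewrite Hx1, Hx2. assert (Ht := Htan u Hu). cbv beta in Ht.
  transitivity (g t * g t * ((k1 * xi (X u) + c1) * Derive (fun s => eta (X s)) u));
    [field; lra | rewrite Ht; field; lra].
Qed.

Theorem theorem11p4 (a b : Rbar) (X : R -> R * R) :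
  space_like_curve a b X ->
  (invariant_nontrivial a b X <->
   exists S : R * R -> R * R, similarity S /\
     ((forall u, in_open a b u -> on_line (S (X u))) \/
      (forall u, in_open a b u -> on_hyperbola (S (X u))) \/
      (exists alpha : R, alpha <> 1 /\ alpha <> -1 /\
         forall u, in_open a b u -> on_spiral alpha (S (X u))) \/
      (forall u, in_open a b u -> on_exp_curve (S (X u))))).
Proof.
  intros Hcurve.
  destruct (space_like_curve_lightlike a b X Hcurve) as [HU [HV Hsl]].
  split.
  - intros Hinv.
    destruct (tangent_field_of_invariant a b X Hcurve Hinv) as [k1 [c1 [k2 [c2 [Hnz Htan]]]]].
    destruct (lightlike_model_of_tangent a b _ _ k1 c1 k2 c2 (proj1 Hcurve) HU HV Hsl Htan Hnz)
      as [Hmodel | Hmodel].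
    + exact (similar_model_of_lightlike_model a b X false Hmodel).
    + exact (similar_model_of_lightlike_model a b X true Hmodel).
  - intros [S [HS Hmodel]].
    destruct (tangent_field_of_similar_model a b X S Hcurve HS Hmodel)
      as [k1 [c1 [k2 [c2 [Hnz Htan]]]]].
    exact (invariant_of_tangent_field a b X k1 c1 k2 c2 Hcurve Hnz Htan).
Qed.
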